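(* Let $\mathcal{X}$ be a subset of a normed space, $\mathcal{H}$ an RKHS on $\mathcal{X}$ whose kernel is radial, $\mathfrak{K}(x,y)=\mathfrak{K}_0(\|x-y\|)$ with $\mathfrak{K}_0$ injective, and let $F:\mathcal{X}\to\mathcal{X}$ be a bijection. Then the Koopman operator $\mathcal{K}_F$ on $\mathcal{H}$ is unitary if and only if $F$ is an isometry, i.e. $\|F(x)-F(y)\|=\|x-y\|$ for all $x,y\in\mathcal{X}$.
   Context: $\mathcal{H}$ is a reproducing kernel Hilbert space of complex-valued functions on $\mathcal{X}$ with kernel $\mathfrak{K}$. The Koopman operator is $\mathcal{K}_Fg=g\circ F$ with domain $\{g\in\mathcal{H}:g\circ F\in\mathcal{H}\}$; unitary means bounded, everywhere defined, with $\mathcal{K}_F\mathcal{K}_F^*=\mathcal{K}_F^*\mathcal{K}_F=I$. *)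

From HB Require Import structures.
From mathcomp Require Import all_boot all_order all_algebra.
From mathcomp Require Import all_classical all_reals all_analysis.
From mathcomp Require Import complex.
Set Implicit Arguments. Unset Strict Implicit. Unset Printing Implicit Defensive.
Import Order.TTheory GRing.Theory Num.Theory.
Import numFieldNormedType.Exports.
Local Open Scope ring_scope.
Local Open Scope classical_set_scope.

(* It is given as a set [rk_carrier] of functions
   X -> C (a linear subspace), an inner product [rk_ip] (linear in the first
   argument, conjugate symmetric, positive definite on the carrier), complete
   for the induced norm, containing the kernel sections kern(.,y), and
   satisfying the reproducing property f y = <f, kern(.,y)>. *)
Record RKHS (C : numClosedFieldType) (X : Type) (kern : X -> X -> C) := {
  rk_carrier : set (X -> C);
  rk_ip : (X -> C) -> (X -> C) -> C;
  rk_zero : rk_carrier (fun _ => 0);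
  rk_add : forall f g, rk_carrier f -> rk_carrier g ->
      rk_carrier (fun x => f x + g x);
  rk_scale : forall (a : C) f, rk_carrier f -> rk_carrier (fun x => a * f x);
  rk_ip_add : forall f g h, rk_carrier f -> rk_carrier g -> rk_carrier h ->
      rk_ip (fun x => f x + g x) h = rk_ip f h + rk_ip g h;
  rk_ip_scale : forall (a : C) f h, rk_carrier f -> rk_carrier h ->
      rk_ip (fun x => a * f x) h = a * rk_ip f h;
  rk_ip_sym : forall f g, rk_carrier f -> rk_carrier g ->
      rk_ip g f = (rk_ip f g)^*;
  rk_ip_ge0 : forall f, rk_carrier f -> 0 <= rk_ip f f;
  rk_ip_eq0 : forall f, rk_carrier f -> rk_ip f f = 0 -> f = (fun _ => 0);
  rk_complete : forall u : nat -> X -> C, (forall n, rk_carrier (u n)) ->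
      (forall e : C, 0 < e -> exists N : nat, forall m n, (N <= m)%N -> (N <= n)%N ->
          rk_ip (fun x => u m x - u n x) (fun x => u m x - u n x) < e) ->
      exists2 f, rk_carrier f &
        (forall e : C, 0 < e -> exists N : nat, forall n, (N <= n)%N ->
          rk_ip (fun x => u n x - f x) (fun x => u n x - f x) < e);
  rk_kernel_mem : forall y, rk_carrier (fun x => kern x y);
  rk_reproducing : forall f y, rk_carrier f -> f y = rk_ip f (fun x => kern x y)
}.

Definition koopman_dom (C : numClosedFieldType) (X : Type) (kern : X -> X -> C)
  (H : RKHS kern) (F : X -> X) : set (X -> C) :=
  [set g | rk_carrier H g /\ rk_carrier H (g \o F)].

(* K_F is unitary: everywhere defined on H, bounded, and it has an adjoint
   A (an operator on H with <K_F g, h> = <g, A h>) with K_F A = A K_F = I. *)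
Definition koopman_unitary (C : numClosedFieldType) (X : Type)
  (kern : X -> X -> C) (H : RKHS kern) (F : X -> X) : Prop :=
  [/\ koopman_dom H F = rk_carrier H,
      exists M : C, forall g, rk_carrier H g ->
         rk_ip H (g \o F) (g \o F) <= M * rk_ip H g g &
      exists A : (X -> C) -> (X -> C),
        [/\ forall h, rk_carrier H h -> rk_carrier H (A h),
            forall g h, rk_carrier H g -> rk_carrier H h ->
               rk_ip H (g \o F) h = rk_ip H g (A h),
            forall h, rk_carrier H h -> (A h) \o F = h &
            forall g, rk_carrier H g -> A (g \o F) = g]].

From HB Require Import structures.
From mathcomp Require Import all_boot all_order all_algebra.
From mathcomp Require Import all_classical all_reals all_analysis.
From mathcomp Require Import complex ring lra.
Import Order.TTheory GRing.Theory Num.Theory.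
Import numFieldNormedType.Exports.
Local Open Scope ring_scope.
Local Open Scope classical_set_scope.
Set Implicit Arguments. Unset Strict Implicit. Unset Printing Implicit Defensive.

(* If K_F is unitary, its adjoint sends the kernel section k_y to k_(F y), since
   both represent g |-> g (F y); evaluating K_F (K_F^* k_y) = k_y at x gives
   K(F x, F y) = K(x, y), and a radial kernel with injective profile turns this
   into the isometry property.
   Conversely, if F preserves the kernel, composing with F sends a finite kernel
   combination sum_i c_i k_(y_i) to sum_i c_i k_(F^-1 y_i) and preserves inner
   products.  These combinations are dense: a minimizing sequence for the distance
   from g to them is Cauchy by the parallelogram law, and converges pointwise to
   g because adding one kernel term k_x lowers the distance by at least
   |defect at x|^2 / (|k_x|^2 + 1).  Completeness extends the isometry from the
   combinations to all of H, and composition with F^-1 is its inverse and adjoint. *)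

(* Only an upper bound: for the nonnegative sequences used below it means [u --> 0]. *)
Definition vanishing (R : numDomainType) (u : nat -> R) :=
  forall e : R, 0 < e -> exists N : nat, forall n, (N <= n)%N -> u n < e.

Definition vanishing2 (R : numDomainType) (c : nat -> nat -> R) :=
  forall e : R, 0 < e -> exists N : nat, forall m n, (N <= m)%N -> (N <= n)%N ->
    c m n < e.

Section Vanishing.
Variable R : realFieldType.
Implicit Types u v r : nat -> R.

Lemma vanishing_le u v : (forall n, u n <= v n) -> vanishing v -> vanishing u.
Proof.
move=> uv hv e e0; have [N HN] := hv e e0.
by exists N => n /HN; apply: le_lt_trans.
Qed.

Lemma vanishingD u v : vanishing u -> vanishing v -> vanishing (fun n => u n + v n).
Proof.
move=> hu hv e e0; have e20 : 0 < e / 2 by rewrite divr_gt0.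
have [N1 H1] := hu _ e20; have [N2 H2] := hv _ e20.
exists (maxn N1 N2) => n; rewrite geq_max => /andP[/H1 ? /H2 ?].
by rewrite [e](splitr e) ltrD.
Qed.

Lemma vanishingZ k u : 0 <= k -> vanishing u -> vanishing (fun n => k * u n).
Proof.
move=> k0 hu e e0; have k10 : 0 < k + 1 by rewrite ltr_wpDl.
have [N HN] := hu _ (divr_gt0 e0 k10); exists N => n /HN.
rewrite ltr_pdivlMr // => hun.
have [u0|u0] := leP 0 (u n); nra.
Qed.

Lemma vanishingM u v : (forall n, 0 <= u n) -> vanishing u -> vanishing v ->
  vanishing (fun n => u n * v n).
Proof.
move=> u0 hu hv e e0; have [N1 H1] := hu _ ltr01; have [N2 H2] := hv _ e0.
exists (maxn N1 N2) => n; rewrite geq_max => /andP[/H1 u1 /H2 ve].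
have := u0 n; have [v0|v0] := leP 0 (v n); nra.
Qed.

Lemma le0_vanishing c u : vanishing u -> (forall n, c <= u n) -> c <= 0.
Proof.
move=> hu cu; rewrite leNgt; apply/negP => /hu[N HN].
by have := HN N (leqnn N); rewrite ltNge cu.
Qed.

Lemma vanishing2_le r (c : nat -> nat -> R) :
  vanishing r -> (forall m n, c m n <= r m + r n) -> vanishing2 c.
Proof.
move=> hr hc e e0; have e20 : 0 < e / 2 by rewrite divr_gt0.
have [N HN] := hr _ e20; exists N => m n /HN rm /HN rn.
by apply: le_lt_trans (hc m n) _; rewrite [e](splitr e) ltrD.
Qed.

End Vanishing.

Lemma vanishing_inv_succ (R : archiRealFieldType) :
  vanishing (fun n => (n.+1%:R : R)^-1).
Proof.
move=> e e0; have /archi_boundP he : 0 <= e^-1 by rewrite invr_ge0 ltW.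
exists (Num.Def.archi_bound e^-1) => n hn.
rewrite invf_plt ?posrE ?ltr0Sn //; apply: lt_le_trans he _.
by rewrite ler_nat (leq_trans hn).
Qed.

Lemma minimizing_sequence (R : realType) (T : Type) (f : T -> R) (a0 : T) :
  (exists m, forall a, m <= f a) ->
  exists d : R, (forall a, d <= f a) /\
    exists s : nat -> T, forall n, f (s n) < d + n.+1%:R^-1.
Proof.
move=> [m fm]; have lb : has_lbound (range f) by exists m => _ [a _ <-].
have hinf : has_inf (range f) by split => //; exists (f a0), a0.
exists (inf (range f)); split; first by move=> a; apply: ge_inf => //; exists a.
suff /choice[s hs] : forall n, exists a, f a < inf (range f) + n.+1%:R^-1 by exists s.
move=> n; have n0 : 0 < n.+1%:R^-1 :> R by rewrite invr_gt0.
by have [_ [a _ <-] ?] := inf_adherent n0 hinf; exists a.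
Qed.

Section SquaredModulus.
Variable R : rcfType.
Implicit Types z w : R[i].

Definition sqmod z : R := complex.Re (z * z^*).

Lemma real_complexE z : z^* = z -> z = (complex.Re z)%:C%C.
Proof. by move=> hz; rewrite RRe_real // CrealE hz. Qed.

Lemma sqmodE z : z * z^* = (sqmod z)%:C%C.
Proof. by apply: real_complexE; rewrite rmorphM /= conjCK mulrC. Qed.

Lemma sqmod_ge0 z : 0 <= sqmod z.
Proof. by rewrite -lecR -sqmodE mul_conjC_ge0. Qed.

Lemma sqmod_eq0 z : sqmod z = 0 -> z = 0.
Proof.
move=> h; have /eqP : z * z^* = 0 by rewrite sqmodE h.
by rewrite mulf_eq0 conjC_eq0 orbb => /eqP.
Qed.

Lemma sqmodN z : sqmod (- z) = sqmod z.
Proof. by rewrite /sqmod rmorphN mulrNN. Qed.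

Lemma sqmodJ z : sqmod z^* = sqmod z.
Proof. by rewrite /sqmod conjCK mulrC. Qed.

Lemma sqmod2 : sqmod 2 = 4.
Proof. by rewrite /sqmod conjC_nat -natrM. Qed.

Lemma sqmodD_le z w : sqmod (z + w) <= 2 * sqmod z + 2 * sqmod w.
Proof.
have par : (z + w) * (z + w)^* + (z - w) * (z - w)^* = 2 * (z * z^*) + 2 * (w * w^*).
  by rewrite !rmorphD !rmorphN /=; ring.
have /complexI <- :
    (sqmod (z + w) + sqmod (z - w))%:C%C = (2 * sqmod z + 2 * sqmod w)%:C%C.
  by rewrite !rmorphD !rmorphM /= -!sqmodE par rmorph_nat.
by rewrite lerDl sqmod_ge0.
Qed.

Lemma gt0_complexE z : 0 < z -> z = (complex.Re z)%:C%C.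
Proof. by move=> z0; rewrite RRe_real // gtr0_real. Qed.

Lemma gt0_complex_Re z : 0 < z -> 0 < complex.Re z.
Proof. by move=> z0; rewrite -ltcR -gt0_complexE. Qed.

Lemma vanishing_sqmod_eq0 z (u : nat -> R) :
  vanishing u -> (forall n, sqmod z <= u n) -> z = 0.
Proof.
move=> hu hz; apply: sqmod_eq0; apply/eqP.
by rewrite eq_le sqmod_ge0 (le0_vanishing hu hz).
Qed.

Lemma vanishing_sqmod_unique (z : nat -> R[i]) w1 w2 :
  vanishing (fun n => sqmod (z n - w1)) -> vanishing (fun n => sqmod (z n - w2)) ->
  w1 = w2.
Proof.
move=> h1 h2; apply/eqP; rewrite -subr_eq0; apply/eqP.
have two0 : 0 <= 2 :> R by [].
apply: (vanishing_sqmod_eq0 (vanishingD (vanishingZ two0 h1) (vanishingZ two0 h2))) => n.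
have -> : w1 - w2 = - (z n - w1) + (z n - w2) by ring.
by rewrite -[sqmod (z n - w1)]sqmodN sqmodD_le.
Qed.

End SquaredModulus.

Section ReproducingKernel.
Variables (R : realType) (X : Type) (kern : X -> X -> R[i]) (H : RKHS kern).
Local Notation C := R[i].
Local Notation mem := (rk_carrier H).
Local Notation ip := (rk_ip H).
Implicit Types (f g h u v : X -> C) (a c : C) (x y : X).

Definition ksec y : X -> C := fun x => kern x y.

Lemma rk_memD f g : mem f -> mem g -> mem (f \+ g).
Proof. exact: rk_add. Qed.

Lemma rk_memZ a f : mem f -> mem (a \*: f).
Proof. exact: rk_scale. Qed.

Lemma subf_addZ f g : f \- g = f \+ (-1) \*: g.
Proof. by apply: funext => x; rewrite /= scaleN1r. Qed.

Lemma rk_memB f g : mem f -> mem g -> mem (f \- g).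
Proof. by move=> Sf Sg; rewrite subf_addZ; apply: rk_memD => //; apply: rk_memZ. Qed.

Lemma rk_memK y : mem (ksec y).
Proof. exact: rk_kernel_mem. Qed.

Lemma ipDl f g h : mem f -> mem g -> mem h -> ip (f \+ g) h = ip f h + ip g h.
Proof. exact: rk_ip_add. Qed.

Lemma ipZl a f h : mem f -> mem h -> ip (a \*: f) h = a * ip f h.
Proof. exact: rk_ip_scale. Qed.

Lemma ipC f g : mem f -> mem g -> ip g f = (ip f g)^*.
Proof. exact: rk_ip_sym. Qed.

Lemma ipDr f g h : mem f -> mem g -> mem h -> ip h (f \+ g) = ip h f + ip h g.
Proof.
move=> Sf Sg Sh.
by rewrite (ipC (rk_memD Sf Sg) Sh) ipDl // rmorphD /= (ipC Sf Sh) (ipC Sg Sh).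
Qed.

Lemma ipZr a f h : mem f -> mem h -> ip h (a \*: f) = a^* * ip h f.
Proof.
by move=> Sf Sh; rewrite (ipC (rk_memZ a Sf) Sh) ipZl // rmorphM /= (ipC Sf Sh).
Qed.

Lemma ipBl f g h : mem f -> mem g -> mem h -> ip (f \- g) h = ip f h - ip g h.
Proof. by move=> Sf Sg Sh; rewrite subf_addZ ipDl ?ipZl ?mulN1r //; apply: rk_memZ. Qed.

Lemma ipBr f g h : mem f -> mem g -> mem h -> ip h (f \- g) = ip h f - ip h g.
Proof.
move=> Sf Sg Sh.
by rewrite subf_addZ ipDr ?ipZr ?rmorphN ?rmorph1 ?mulN1r //; apply: rk_memZ.
Qed.

Lemma ip_ksecr f y : mem f -> ip f (ksec y) = f y.
Proof. by move=> Sf; rewrite -rk_reproducing. Qed.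

Lemma ip_ksecl f y : mem f -> ip (ksec y) f = (f y)^*.
Proof. by move=> Sf; rewrite (ipC Sf (rk_memK y)) ip_ksecr. Qed.

Definition sqnorm f : R := complex.Re (ip f f).

Lemma sqnormE f : mem f -> ip f f = (sqnorm f)%:C%C.
Proof. by move=> Sf; apply: real_complexE; rewrite -ipC. Qed.

Lemma sqnorm_ge0 f : mem f -> 0 <= sqnorm f.
Proof. by move=> Sf; rewrite -lecR -sqnormE // rk_ip_ge0. Qed.

(* The [+ 1] keeps the coefficient and the bound meaningful when [v = 0]. *)
Lemma sqnorm_sub_proj_le u v : mem u -> mem v ->
  sqnorm (u \- (ip u v / (ip v v + 1)) \*: v) + sqmod (ip u v) / (sqnorm v + 1)
    <= sqnorm u.
Proof.
move=> Su Sv; set w := ip u v; set c := w / _.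
have Scv := rk_memZ c Sv; have Sd := rk_memB Su Scv.
have v1 : 0 < ip v v + 1 by rewrite ltr_wpDl ?rk_ip_ge0.
have cJ : c^* = w^* / (ip v v + 1).
  by rewrite fmorph_div /= rmorphD /= -ipC ?conjC1.
have expand : ip (u \- c \*: v) (u \- c \*: v)
    = ip u u - c^* * w - c * w^* + c * c^* * ip v v.
  rewrite ipBl // (ipBr Su Scv Su) (ipBr Su Scv Scv) !ipZl // !ipZr //.
  by rewrite (ipC Su Sv) -/w; ring.
have key : ip (u \- c \*: v) (u \- c \*: v) + w * w^* / (ip v v + 1) <= ip u u.
  rewrite expand cJ -subr_ge0.
  have -> : ip u u - (ip u u - w^* / (ip v v + 1) * w - c * w^*
      + c * (w^* / (ip v v + 1)) * ip v v + w * w^* / (ip v v + 1))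
      = w * w^* / (ip v v + 1) ^+ 2.
    by rewrite /c; field; rewrite gt_eqF.
  by rewrite divr_ge0 ?mul_conjC_ge0 ?exprn_ge0 ?ltW.
move: key; rewrite !sqnormE // sqmodE -lecR; congr (_ <= _).
by rewrite rmorphD /= fmorph_div /= rmorphD /= rmorph1.
Qed.

Lemma sqmod_ip_le u v : mem u -> mem v -> sqmod (ip u v) <= (sqnorm v + 1) * sqnorm u.
Proof.
move=> Su Sv; have v1 : 0 < sqnorm v + 1 by rewrite ltr_wpDl // sqnorm_ge0.
rewrite mulrC -ler_pdivrMr //; apply: le_trans (sqnorm_sub_proj_le Su Sv).
rewrite lerDr; apply/sqnorm_ge0/rk_memB => //; exact: rk_memZ.
Qed.

Definition eval_bound y : R := sqnorm (ksec y) + 1.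

Lemma eval_bound_gt0 y : 0 < eval_bound y.
Proof. by rewrite ltr_wpDl //; apply/sqnorm_ge0/rk_memK. Qed.

Lemma sqmod_eval_le u y : mem u -> sqmod (u y) <= eval_bound y * sqnorm u.
Proof. by move=> Su; rewrite -ip_ksecr //; apply: sqmod_ip_le => //; apply: rk_memK. Qed.

Lemma sqnorm_parallelogram f g : mem f -> mem g ->
  sqnorm (f \+ g) + sqnorm (f \- g) = 2 * sqnorm f + 2 * sqnorm g.
Proof.
move=> Sf Sg; have Sfg := rk_memD Sf Sg; have Sfg' := rk_memB Sf Sg.
have par : ip (f \+ g) (f \+ g) + ip (f \- g) (f \- g) = 2 * ip f f + 2 * ip g g.
  rewrite (ipDl Sf Sg Sfg) (ipBl Sf Sg Sfg') (ipDr Sf Sg Sf) (ipDr Sf Sg Sg).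
  by rewrite (ipBr Sf Sg Sf) (ipBr Sf Sg Sg) (ipC Sf Sg); ring.
by apply: complexI; rewrite !rmorphD !rmorphM /= rmorph_nat -!sqnormE.
Qed.

Lemma sqnormD_le f g : mem f -> mem g -> sqnorm (f \+ g) <= 2 * sqnorm f + 2 * sqnorm g.
Proof.
by move=> Sf Sg; rewrite -sqnorm_parallelogram // lerDl; apply/sqnorm_ge0/rk_memB.
Qed.

Lemma sqnormZ a f : mem f -> sqnorm (a \*: f) = sqmod a * sqnorm f.
Proof.
move=> Sf; have Saf := rk_memZ a Sf; apply: complexI.
by rewrite -sqnormE // ipZl // ipZr // mulrA sqmodE sqnormE // -rmorphM.
Qed.

Lemma sqnormBC f g : mem f -> mem g -> sqnorm (f \- g) = sqnorm (g \- f).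
Proof.
move=> Sf Sg; have -> : g \- f = (-1) \*: (f \- g).
  by apply: funext => x; rewrite /= scaleN1r opprB.
by rewrite sqnormZ ?sqmodN /sqmod ?conjC1 ?mulr1 ?mul1r //; apply: rk_memB.
Qed.

Lemma sqnormB_le f g h : mem f -> mem g -> mem h ->
  sqnorm (f \- g) <= 2 * sqnorm (f \- h) + 2 * sqnorm (h \- g).
Proof.
move=> Sf Sg Sh; have -> : f \- g = (f \- h) \+ (h \- g).
  by apply: funext => x; rewrite /= addrA subrK.
by apply: sqnormD_le; apply: rk_memB.
Qed.

Definition sqnorm_cvg (t : nat -> X -> C) h := vanishing (fun n => sqnorm (t n \- h)).

Lemma sqnorm_cvg_pointwise t h x : (forall n, mem (t n)) -> mem h ->
  sqnorm_cvg t h -> vanishing (fun n => sqmod (t n x - h x)).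
Proof.
move=> St Sh th; apply: vanishing_le (vanishingZ (ltW (eval_bound_gt0 x)) th) => n.
by apply: sqmod_eval_le; apply: rk_memB.
Qed.

Lemma rk_cauchy_pointwise_lim t h : (forall n, mem (t n)) ->
  vanishing2 (fun m n => sqnorm (t m \- t n)) ->
  (forall x, vanishing (fun n => sqmod (t n x - h x))) ->
  mem h /\ sqnorm_cvg t h.
Proof.
move=> St cauchy th.
have [q Sq tq] : exists2 q, mem q & sqnorm_cvg t q.
  have [|q Sq tq] := rk_complete St.
    move=> e e0; have [N HN] := cauchy _ (gt0_complex_Re e0).
    exists N => m n hm hn; rewrite (sqnormE (rk_memB (St m) (St n))).
    by rewrite [X in _ < X]gt0_complexE // ltcR HN.
  exists q => // e e0; have [N HN] := tq e%:C%C ltac:(by rewrite ltcR).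
  by exists N => n /HN; rewrite (sqnormE (rk_memB (St n) Sq)) ltcR.
suff -> : h = q by [].
apply: funext => x; apply/eqP; rewrite -subr_eq0; apply/eqP.
apply: (@vanishing_sqmod_eq0 _ _
  (fun n => 2 * sqmod (t n x - q x) + 2 * sqmod (t n x - h x))).
  apply: vanishingD; apply: vanishingZ => //; exact: sqnorm_cvg_pointwise.
move=> n; have -> : h x - q x = (t n x - q x) + - (t n x - h x) by ring.
by rewrite -[sqmod (t n x - h x)]sqmodN sqmodD_le.
Qed.

Definition kcomb (l : seq (C * X)) : X -> C :=
  fun x => \sum_(p <- l) p.1 * kern x p.2.

Definition kscale a (l : seq (C * X)) := [seq (a * p.1, p.2) | p <- l].

Lemma kcomb_nil : kcomb [::] = fun=> 0.
Proof. by apply: funext => x; rewrite /kcomb big_nil. Qed.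

Lemma kcomb_cons p l : kcomb (p :: l) = p.1 \*: ksec p.2 \+ kcomb l.
Proof. by apply: funext => x; rewrite /kcomb big_cons. Qed.

Lemma kcomb_cat l m : kcomb (l ++ m) = kcomb l \+ kcomb m.
Proof. by apply: funext => x; rewrite /kcomb big_cat. Qed.

Lemma kcombZ a l : kcomb (kscale a l) = a \*: kcomb l.
Proof.
apply: funext => x; rewrite /kcomb big_map /= -[_ *: _]/(a * _) mulr_sumr.
by apply: eq_bigr => p _; rewrite mulrA.
Qed.

Lemma kcombB l m : kcomb (l ++ kscale (-1) m) = kcomb l \- kcomb m.
Proof. by rewrite kcomb_cat kcombZ subf_addZ. Qed.

Lemma mem_kcomb l : mem (kcomb l).
Proof.
elim: l => [|p l IH]; first by rewrite kcomb_nil; apply: rk_zero.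
by rewrite kcomb_cons; apply: rk_memD => //; apply/rk_memZ/rk_memK.
Qed.

Lemma ip_kcombl l h : mem h -> ip (kcomb l) h = \sum_(p <- l) p.1 * (h p.2)^*.
Proof.
move=> Sh; elim: l => [|p l IH].
  have -> : kcomb [::] = 0 \*: h.
    by rewrite kcomb_nil; apply: funext => x; rewrite /= scale0r.
  by rewrite ipZl // mul0r big_nil.
have Sp := rk_memZ p.1 (rk_memK p.2).
rewrite kcomb_cons (ipDl Sp (mem_kcomb l) Sh) (ipZl _ (rk_memK _) Sh).
by rewrite ip_ksecl // IH big_cons.
Qed.

Section Density.
Variables (g : X -> C) (d : R).
Hypotheses (Sg : mem g) (hd : forall l, d <= sqnorm (g \- kcomb l)).

Lemma sqmod_kcomb_defect_le l x :
  sqmod (kcomb l x - g x) <= eval_bound x * (sqnorm (g \- kcomb l) - d).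
Proof.
set u := g \- kcomb l; have Su : mem u by apply/rk_memB/mem_kcomb.
have := sqnorm_sub_proj_le Su (rk_memK x); set c := _ / _.
have -> : u \- c \*: ksec x = g \- kcomb (l ++ [:: (c, x)]).
  apply: funext => y.
  by rewrite kcomb_cat /= /kcomb big_cons big_nil addr0 opprD addrA.
rewrite ip_ksecr // -/(eval_bound x) => proj.
have := hd (l ++ [:: (c, x)]); rewrite -[sqmod _]sqmodN opprB mulrC.
rewrite -ler_pdivrMr ?eval_bound_gt0 //; move: proj.
move: (sqnorm (g \- _)) (sqmod (u x) / _) => a b; lra.
Qed.

Lemma sqnorm_kcomb_sub_le l m : sqnorm (kcomb l \- kcomb m)
  <= 2 * (sqnorm (g \- kcomb l) - d) + 2 * (sqnorm (g \- kcomb m) - d).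
Proof.
have Sl : mem (g \- kcomb l) by apply/rk_memB/mem_kcomb.
have Sm : mem (g \- kcomb m) by apply/rk_memB/mem_kcomb.
have := sqnorm_parallelogram Sl Sm.
have -> : (g \- kcomb l) \+ (g \- kcomb m) = 2 \*: (g \- kcomb (kscale (1/2) (l ++ m))).
  apply: funext => y; rewrite kcombZ kcomb_cat /=.
  by rewrite -![_ *: _]/(_ * _); field.
have -> : (g \- kcomb l) \- (g \- kcomb m) = kcomb m \- kcomb l.
  by apply: funext => y; rewrite /=; ring.
rewrite sqnormZ; last by apply/rk_memB/mem_kcomb.
rewrite (sqnormBC (mem_kcomb m) (mem_kcomb l)) sqmod2.
have := hd (kscale (1/2) (l ++ m)).
move: (sqnorm (g \- kcomb _)) (sqnorm (kcomb l \- _)) => a b; lra.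
Qed.

End Density.

Lemma kcomb_dense g : mem g ->
  exists s : nat -> seq (C * X), sqnorm_cvg (fun n => kcomb (s n)) g.
Proof.
move=> Sg.
have [|d [hd [s hs]]] := @minimizing_sequence _ _ (fun l => sqnorm (g \- kcomb l)) [::].
  by exists 0 => l; apply/sqnorm_ge0/rk_memB/mem_kcomb.
have excess n : sqnorm (g \- kcomb (s n)) - d <= n.+1%:R^-1.
  by rewrite lerBlDl ltW.
have [//| |] := @rk_cauchy_pointwise_lim (fun n => kcomb (s n)) g (fun n => mem_kcomb _).
- apply: (vanishing2_le (vanishingZ (ler0n _ 2) (@vanishing_inv_succ R))) => m n.
  apply: le_trans (sqnorm_kcomb_sub_le Sg hd _ _) _.
  by rewrite lerD // ler_pM2l // excess.
- move=> x.
  apply: vanishing_le (vanishingZ (ltW (eval_bound_gt0 x)) (@vanishing_inv_succ R)).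
  move=> n; apply: le_trans (sqmod_kcomb_defect_le Sg hd _ _) _.
  by rewrite ler_pM2l ?eval_bound_gt0 // excess.
by exists s.
Qed.

Lemma ip_cvg (f g : nat -> X -> C) (f0 g0 : X -> C) :
  (forall n, mem (f n)) -> (forall n, mem (g n)) -> mem f0 -> mem g0 ->
  sqnorm_cvg f f0 -> sqnorm_cvg g g0 ->
  vanishing (fun n => sqmod (ip (f n) (g n) - ip f0 g0)).
Proof.
move=> Sf Sg Sf0 Sg0 cvf cvg.
have Sdf n := rk_memB (Sf n) Sf0; have Sdg n := rk_memB (Sg n) Sg0.
have f00 := sqnorm_ge0 Sf0; have g00 := sqnorm_ge0 Sg0.
have c1 : 0 <= 2 * (2 * sqnorm g0 + 1) by lra.
have c2 : 0 <= 2 * (sqnorm f0 + 1) by lra.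
have cvfg := vanishingM (fun n => sqnorm_ge0 (Sdg n)) cvg cvf.
apply: (vanishing_le _ (vanishingD (vanishingZ (ler0n _ 4) cvfg)
  (vanishingD (vanishingZ c1 cvf) (vanishingZ c2 cvg)))) => n /=.
set al := sqnorm (f n \- f0); set be := sqnorm (g n \- g0).
have al0 : 0 <= al := sqnorm_ge0 (Sdf n).
have -> : ip (f n) (g n) - ip f0 g0 = ip (f n \- f0) (g n) + ip f0 (g n \- g0).
  by rewrite ipBl // ipBr //; ring.
apply: le_trans (sqmodD_le _ _) _.
have q1 := sqmod_ip_le (Sdf n) (Sg n).
have q2 : sqmod (ip f0 (g n \- g0)) <= (sqnorm f0 + 1) * be.
  by rewrite (ipC (Sdg n) Sf0) sqmodJ; apply: sqmod_ip_le.
have ng : sqnorm (g n) + 1 <= 2 * be + (2 * sqnorm g0 + 1).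
  have -> : g n = (g n \- g0) \+ g0 by apply: funext => x; rewrite /= subrK.
  by rewrite addrA lerD2r; apply: sqnormD_le.
have := ler_wpM2r al0 ng; move: q1 q2.
move: (sqmod _) (sqmod _) (sqnorm (g n)) => x y z; nra.
Qed.

Section Composition.
Variables (F G : X -> X).
Hypotheses (GF : cancel G F) (kern_inv : forall x y, kern (F x) (F y) = kern x y).

Definition kpull (l : seq (C * X)) := [seq (p.1, G p.2) | p <- l].

Lemma kcomb_comp l : kcomb l \o F = kcomb (kpull l).
Proof.
apply: funext => x; rewrite /kcomb big_map /=.
by apply: eq_bigr => p _; rewrite -{1}(GF p.2) kern_inv.
Qed.

Lemma mem_kcomb_comp l : mem (kcomb l \o F).
Proof. by rewrite kcomb_comp; apply: mem_kcomb. Qed.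

Lemma ip_kcomb_comp l m : ip (kcomb l \o F) (kcomb m \o F) = ip (kcomb l) (kcomb m).
Proof.
rewrite !kcomb_comp !(ip_kcombl _ (mem_kcomb _)) big_map.
by apply: eq_bigr => p _ /=; rewrite -kcomb_comp /= GF.
Qed.

Lemma sqnorm_kcomb_comp l m :
  sqnorm ((kcomb l \o F) \- (kcomb m \o F)) = sqnorm (kcomb l \- kcomb m).
Proof.
have -> : (kcomb l \o F) \- (kcomb m \o F) = kcomb (l ++ kscale (-1) m) \o F.
  by rewrite kcombB.
by rewrite /sqnorm ip_kcomb_comp kcombB.
Qed.

Lemma comp_sqnorm_cvg g s : mem g -> sqnorm_cvg (fun n => kcomb (s n)) g ->
  mem (g \o F) /\ sqnorm_cvg (fun n => kcomb (s n) \o F) (g \o F).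
Proof.
move=> Sg sg; apply: rk_cauchy_pointwise_lim.
- by move=> n; apply: mem_kcomb_comp.
- apply: (vanishing2_le (vanishingZ (ler0n _ 2) sg)) => m n.
  rewrite sqnorm_kcomb_comp (sqnormBC (mem_kcomb (s n)) Sg).
  exact: sqnormB_le (mem_kcomb _) (mem_kcomb _) Sg.
- by move=> x; apply: (sqnorm_cvg_pointwise (F x) (fun n => mem_kcomb (s n)) Sg sg).
Qed.

Lemma mem_comp g : mem g -> mem (g \o F).
Proof. by move=> Sg; have [s /(comp_sqnorm_cvg Sg)[]] := kcomb_dense Sg. Qed.

Lemma ip_comp g h : mem g -> mem h -> ip (g \o F) (h \o F) = ip g h.
Proof.
move=> Sg Sh; have [s sg] := kcomb_dense Sg; have [t th] := kcomb_dense Sh.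
have [SgF sgF] := comp_sqnorm_cvg Sg sg; have [ShF thF] := comp_sqnorm_cvg Sh th.
have := ip_cvg (fun n => mem_kcomb_comp (s n)) (fun n => mem_kcomb_comp (t n))
  SgF ShF sgF thF.
under eq_fun do rewrite ip_kcomb_comp.
by move/vanishing_sqmod_unique; apply; apply: ip_cvg; rewrite // => n; apply: mem_kcomb.
Qed.

End Composition.

Lemma koopman_unitary_of_kernel_invariant F G : cancel F G -> cancel G F ->
  (forall x y, kern (F x) (F y) = kern x y) -> koopman_unitary H F.
Proof.
move=> FG GF invF.
have invG x y : kern (G x) (G y) = kern x y by rewrite -invF !GF.
have SF := mem_comp GF invF; have SG := mem_comp FG invG.
split.
- by rewrite /koopman_dom; apply/seteqP; split=> [g []|g Sg] //; split => //; apply: SF.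
- by exists 1 => g Sg; rewrite mul1r (ip_comp GF invF).
- exists (fun h => h \o G); split => //.
  + move=> g h Sg Sh; rewrite -(ip_comp GF invF Sg (SG _ Sh)).
    by congr (ip _ _); apply: funext => x /=; rewrite FG.
  + by move=> h Sh; apply: funext => x /=; rewrite FG.
  + by move=> g Sg; apply: funext => x /=; rewrite GF.
Qed.

Lemma ipr_inj u v : mem u -> mem v -> (forall g, mem g -> ip g u = ip g v) -> u = v.
Proof.
move=> Su Sv uv; have Sd := rk_memB Su Sv.
have /rk_ip_eq0 d0 : ip (u \- v) (u \- v) = 0 by rewrite ipBr // !uv // subrr.
apply: funext => x; apply/eqP.
by rewrite -subr_eq0 -[u x - v x]/((u \- v) x) d0 // eqxx.
Qed.

Lemma kernel_invariant_of_koopman_unitary F : koopman_unitary H F ->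
  forall x y, kern (F x) (F y) = kern x y.
Proof.
case=> dom _ [A [SA adj AF _]] x y.
have SF g : mem g -> mem (g \o F).
  by move=> Sg; have [] : koopman_dom H F g by rewrite dom.
have AyE : A (ksec y) = ksec (F y).
  apply: ipr_inj (SA _ (rk_memK y)) (rk_memK (F y)) _ => g Sg.
  rewrite -adj //; last exact: rk_memK.
  by rewrite !ip_ksecr //; apply: SF.
by have /(congr1 (fun f => f x)) := AF _ (rk_memK y); rewrite /= AyE.
Qed.

End ReproducingKernel.

Theorem mainTheorem19 (R : realType) (V : normedModType R) (Xs : set V)
  (K0 : R -> R[i])
  (K0_inj : forall r s : R, 0 <= r -> 0 <= s -> K0 r = K0 s -> r = s)
  (H : RKHS (fun x y : {x : V | Xs x} => K0 `|sval x - sval y|))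
  (F : {x : V | Xs x} -> {x : V | Xs x}) (F_bij : bijective F) :
  koopman_unitary H F <->
  (forall x y : {x : V | Xs x}, `|sval (F x) - sval (F y)| = `|sval x - sval y|).
Proof.
case: F_bij => G FG GF; split.
- move=> /kernel_invariant_of_koopman_unitary inv x y.
  by apply: K0_inj; rewrite ?normr_ge0 ?inv.
- move=> iso; apply: (koopman_unitary_of_kernel_invariant H FG GF) => x y /=.
  by rewrite iso.
Qed.
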